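(* Let $F:\mathcal{P}(V,A)\to S_2(A)$ be a consular election rule satisfying SPP and SPO, and let $P$ be a profile. If $\{a,b\}$ is the favourite committee of $P_i$ in the range of $F$ for every voter $i\in V$, then $F(P)=\{a,b\}$.
   Context: $V$ is a finite nonempty set of voters, $A$ a finite set of alternatives; a profile $P$ assigns to each voter $i$ a linear order $P_i$ on $A$; $P_i'P_{-i}$ replaces voter $i$'s order by $P_i'$. $S_2(A)$ is the set of 2-element subsets of $A$; a consular election rule is a map $F:\mathcal{P}(V,A)\to S_2(A)$. SPO: for all $P$, $i$, $P_i'$, $\mathrm{best}(P_i,F(P))\succeq_i\mathrm{best}(P_i,F(P_i'P_{-i}))$; SPP: same with $\mathrm{worst}$, where $\mathrm{best}(P_i,W)$, $\mathrm{worst}(P_i,W)$ are the $P_i$-best and $P_i$-worst elements of $W$. For a linear order $L$ on $A$ and $X,Y\in S_2(A)$: $X\succeq^O Y$ iff the $L$-best element of $X$ is weakly $L$-above that of $Y$; $X\succeq^P Y$ iff the $L$-worst element of $X$ is weakly $L$-above that of $Y$. A favourite committee of $L$ in $\mathcal{X}\subseteq S_2(A)$ is an element of $\mathcal{X}$ maximal in $\mathcal{X}$ under both $\succeq^O$ and $\succeq^P$ (for SPO and SPP rules it is unique in the range of $F$). *)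

From mathcomp Require Import all_boot.
Set Implicit Arguments. Unset Strict Implicit. Unset Printing Implicit Defensive.

(* A linear order on A, as a boolean relation: [r x y] means
   "x is ranked weakly above y" (x ⪰ y). *)
Definition is_linord (A : finType) (r : rel A) : Prop :=
  [/\ reflexive r, antisymmetric r, transitive r & total r].

Definition linord (A : finType) := {r : rel A | is_linord r}.

Definition lrel (A : finType) (L : linord A) : rel A := proj1_sig L.

Definition profile (V A : finType) := V -> linord A.

Definition upd (V A : finType) (P : profile V A) (i : V) (L : linord A)
  : profile V A := fun j => if j == i then L else P j.

Definition committee (A : finType) := {W : {set A} | #|W| == 2}.

Definition rule (V A : finType) := profile V A -> committee A.

Definition is_best (A : finType) (L : linord A) (W : {set A}) (x : A) : Prop :=
  x \in W /\ forall y, y \in W -> lrel L x y.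
Definition is_worst (A : finType) (L : linord A) (W : {set A}) (x : A) : Prop :=
  x \in W /\ forall y, y \in W -> lrel L y x.

Definition SPO (V A : finType) (F : rule V A) : Prop :=
  forall (P : profile V A) (i : V) (L' : linord A) (x y : A),
    is_best (P i) (val (F P)) x ->
    is_best (P i) (val (F (upd P i L'))) y ->
    lrel (P i) x y.
Definition SPP (V A : finType) (F : rule V A) : Prop :=
  forall (P : profile V A) (i : V) (L' : linord A) (x y : A),
    is_worst (P i) (val (F P)) x ->
    is_worst (P i) (val (F (upd P i L'))) y ->
    lrel (P i) x y.

Definition geO (A : finType) (L : linord A) (X Y : {set A}) : Prop :=
  forall x y, is_best L X x -> is_best L Y y -> lrel L x y.
Definition geP (A : finType) (L : linord A) (X Y : {set A}) : Prop :=
  forall x y, is_worst L X x -> is_worst L Y y -> lrel L x y.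

Definition in_range (V A : finType) (F : rule V A) (W : {set A}) : Prop :=
  exists P : profile V A, val (F P) = W.

(* W is a favourite committee of L in the family X: W belongs to X and is
   maximal (= greatest, both preorders being total) in X under ⪰^O and ⪰^P *)
Definition favourite (A : finType) (L : linord A) (X : {set A} -> Prop)
  (W : {set A}) : Prop :=
  X W /\ forall Y, X Y -> geO L W Y /\ geP L W Y.

From mathcomp Require Import all_boot.
From Stdlib Require Import FunctionalExtensionality.
Set Implicit Arguments. Unset Strict Implicit.

(* Since {a, b} is in the range of F, some profile Q has F Q = {a, b}.  Switch
   the voters from Q to P one at a time.  Suppose the outcome is {a, b} before
   voter i is switched and W1 after.  By SPO and SPP (i deviating back to Q_i)
   the best and worst members of W1 are weakly P_i-above those of {a, b}, and
   favouriteness of {a, b} for P_i gives the converse.  A two-element set is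
   determined by its best and worst members, so W1 = {a, b}. *)

Section LinearOrder.
Variables (A : finType) (L : linord A).

Lemma lrel_refl : reflexive (lrel L).
Proof. by case: (proj2_sig L). Qed.

Lemma lrel_anti x y : lrel L x y -> lrel L y x -> x = y.
Proof. by case: (proj2_sig L) => _ anti _ _ xy yx; apply/anti/andP. Qed.

Lemma lrel_total : total (lrel L).
Proof. by case: (proj2_sig L). Qed.

Lemma card2_best_worst (W : {set A}) :
  #|W| == 2 -> exists x y, [/\ W = [set x; y], is_best L W x & is_worst L W y].
Proof.
have set2_extremal x y : lrel L x y ->
    is_best L [set x; y] x /\ is_worst L [set x; y] y.
  move=> xy; rewrite /is_best /is_worst !inE !eqxx orbT.
  by split; split=> // z; rewrite !inE => /orP[]/eqP->; rewrite ?lrel_refl.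
case/cards2P=> x [y [_ ->]]; case/orP: (lrel_total x y) => [xy|yx].
  by exists x, y; case: (set2_extremal x y xy).
by exists y, x; rewrite setUC; case: (set2_extremal y x yx).
Qed.

End LinearOrder.

Section Hybrid.
Variables (V A : finType) (F : rule V A).
Hypotheses (spo : SPO F) (spp : SPP F).

Lemma favourite_deviation_stable (R : profile V A) (i : V) (L : linord A)
    (W : {set A}) :
  favourite (R i) (in_range F) W -> val (F (upd R i L)) = W -> val (F R) = W.
Proof.
move=> [[Q FQ] Wmax] FW.
have cardW : #|W| == 2 by rewrite -FQ (valP (F Q)).
have [x0 [y0 [defW bx0 wy0]]] := card2_best_worst (R i) cardW.
have [geO_ geP_] := Wmax (val (F R)) (ex_intro _ R erefl).
have [x1 [y1 [defW1 bx1 wy1]]] := card2_best_worst (R i) (valP (F R)).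
have bx0' : is_best (R i) (val (F (upd R i L))) x0 by rewrite FW.
have wy0' : is_worst (R i) (val (F (upd R i L))) y0 by rewrite FW.
have bests : x1 = x0 by apply: lrel_anti; [exact: spo bx1 bx0' | exact: geO_].
have worsts : y1 = y0 by apply: lrel_anti; [exact: spp wy1 wy0' | exact: geP_].
by rewrite defW1 defW bests worsts.
Qed.

Variables (P Q : profile V A) (W : {set A}).
Hypotheses (favP : forall i, favourite (P i) (in_range F) W) (FQ : val (F Q) = W).

Definition mix (S : {set V}) : profile V A :=
  fun j => if j \in S then P j else Q j.

Lemma mix0 : mix set0 = Q.
Proof. by apply: functional_extensionality => j; rewrite /mix inE. Qed.

Lemma mixT : mix setT = P.
Proof. by apply: functional_extensionality => j; rewrite /mix inE. Qed.

Lemma upd_mix S i : upd (mix S) i (Q i) = mix (S :\ i).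
Proof.
apply: functional_extensionality => j; rewrite /upd /mix !inE.
by case: eqP => [->|].
Qed.

Lemma F_mix S : val (F (mix S)) = W.
Proof.
have [n] := ubnP #|S|; elim: n S => // n IH S.
case: (set_0Vmem S) => [-> _ | [i iS] ltSn]; first by rewrite mix0.
apply: (@favourite_deviation_stable _ i (Q i)).
  by rewrite /mix iS.
rewrite upd_mix; apply: IH.
by move: ltSn; rewrite (cardsD1 i S) iS add1n ltnS.
Qed.

End Hybrid.

Theorem lemma48 (V A : finType) (F : rule V A) (P : profile V A) (a b : A) :
  0 < #|V| ->
  SPP F -> SPO F ->
  (forall i : V, favourite (P i) (in_range F) [set a; b]) ->
  val (F P) = [set a; b].
Proof.
move=> /card_gt0P[i0 _] spp spo favP.
have [[Q FQ] _] := favP i0.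
by rewrite -(mixT P Q) (F_mix spo spp favP FQ).
Qed.
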